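(* Let $x\geq0$ and $h\in\mathbb{R}$ satisfy $|h|\leq\frac{1}{3\max\{x,1\}}$. Then \[\exp(-3|h|\max\{x,1\})\leq\frac{1-\Phi(x+h)}{1-\Phi(x)}\leq\exp(3|h|\max\{x,1\}).\]
   Context: $\Phi(x):=\int_{-\infty}^x\frac{e^{-t^2/2}}{\sqrt{2\pi}}dt$ is the standard Gaussian c.d.f. *)

From Stdlib Require Import Reals.
From Coquelicot Require Import Coquelicot.
Open Scope R_scope.

Definition gauss_pdf (t : R) : R := exp (- t ^ 2 / 2) / sqrt (2 * PI).

Definition Phi (x : R) : R :=
  RInt_gen gauss_pdf (Rbar_locally m_infty) (at_point x).

(* Write Q = 1 - Phi and phi = gauss_pdf.  Then Q a - Q b is the integral of phi over
   [a, b], and for b >= 0 integrating an explicit antiderivative over [b, b + 2] gives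
   the Mills-type bound phi b <= (b + 1) Q b.  Since phi s = phi b exp ((b^2 - s^2) / 2),
   any v bounding both (b - a) (b + 1) and b^2 - s^2 on [a, b] yields
   Q a <= Q b (1 + v exp (v / 2)) <= exp v Q b.  Taking for b the larger of x and x + h
   and v = 3 |h| max(x, 1), both bounds follow by monotonicity of Q.

   Identifying Phi x with 1/2 + int_0^x phi needs the Gaussian integral; it comes from the
   identity (int_0^x phi)^2 + 2 int_0^1 phi(x) phi(x t) / (1 + t^2) dt = 1/4, whose left
   side has zero derivative and equals 2 phi(0)^2 atan 1 at x = 0. *)

From Stdlib Require Import Reals Lra Psatz.
From Coquelicot Require Import Coquelicot.
Open Scope R_scope.

Lemma exp_le_compat x y : x <= y -> exp x <= exp y.
Proof.
  intros [Hlt | ->]; [left; apply exp_increasing, Hlt | right; reflexivity].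
Qed.

Lemma mul_exp_half_le_exp_sub_1 y : 0 <= y -> y * exp (y / 2) <= exp y - 1.
Proof.
  intros Hy.
  set (g := fun z => exp z - 1 - z * exp (z / 2)).
  destruct (MVT_gen g 0 y (fun z => exp (z / 2) * (exp (z / 2) - 1 - z / 2))) as [c [_ Hg]].
  - intros z _. unfold g; auto_derive; [auto|].
    replace (exp z) with (exp (z / 2) * exp (z / 2)) by (rewrite <- exp_plus; f_equal; field).
    unfold Rdiv; ring.
  - intros z _. apply continuity_pt_filterlim, (ex_derive_continuous g).
    unfold g; auto_derive; auto.
  - assert (0 <= exp (c / 2) * (exp (c / 2) - 1 - c / 2)).
    { apply Rmult_le_pos; [apply Rlt_le, exp_pos|]. pose proof (exp_ineq1_le (c / 2)); lra. }
    unfold g in Hg. rewrite Rmult_0_l, exp_0 in Hg. nra.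
Qed.

Lemma ratio_bounds_exp p q v :
  0 < q -> q <= p <= exp v * q ->
  (exp (- v) <= p / q <= exp v) /\ (exp (- v) <= q / p <= exp v).
Proof.
  intros Hq [Hqp Hpq].
  assert (Hinv : exp (- v) * exp v = 1) by (rewrite <- exp_plus, Rplus_opp_l; apply exp_0).
  pose proof (exp_pos v). pose proof (exp_pos (- v)).
  assert (1 <= exp v) by nra.
  assert (exp (- v) <= 1) by nra.
  repeat split.
  - apply Rle_div_r; nra.
  - apply Rle_div_l; nra.
  - apply Rle_div_r; nra.
  - apply Rle_div_l; nra.
Qed.

Lemma is_derive_0_eq (f : R -> R) :
  (forall x, is_derive f x 0) -> forall a b, f a = f b.
Proof.
  intros Hf a b.
  destruct (MVT_gen f b a (fun _ => 0)) as [c [_ Hc]]; [intros; apply Hf | | lra].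
  intros; apply continuity_pt_filterlim, (ex_derive_continuous f); eexists; apply Hf.
Qed.

Lemma sqrt_2PI_pos : 0 < sqrt (2 * PI).
Proof. apply sqrt_lt_R0; generalize PI_RGT_0; lra. Qed.

Lemma gauss_pdf_pos t : 0 < gauss_pdf t.
Proof. apply Rdiv_lt_0_compat; [apply exp_pos | apply sqrt_2PI_pos]. Qed.

Lemma is_derive_gauss_pdf t : is_derive gauss_pdf t (- t * gauss_pdf t).
Proof.
  pose proof sqrt_2PI_pos.
  unfold gauss_pdf; auto_derive; [lra|].
  replace (- (t * (t * 1)) * / 2) with (- t ^ 2 / 2) by field. field; lra.
Qed.

Lemma continuous_gauss_pdf t : continuous gauss_pdf t.
Proof. apply (ex_derive_continuous gauss_pdf); eexists; apply is_derive_gauss_pdf. Qed.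

Lemma ex_RInt_gauss_pdf a b : ex_RInt gauss_pdf a b.
Proof.
  apply (ex_RInt_continuous (V := R_CompleteNormedModule)); intros; apply continuous_gauss_pdf.
Qed.

Lemma RInt_gauss_pdf_ge_0 a b : a <= b -> 0 <= RInt gauss_pdf a b.
Proof.
  intros Hab.
  apply RInt_ge_0; [lra | apply ex_RInt_gauss_pdf |]; intros; apply Rlt_le, gauss_pdf_pos.
Qed.

Lemma gauss_pdf_shift s y : gauss_pdf s = gauss_pdf y * exp ((y ^ 2 - s ^ 2) / 2).
Proof.
  pose proof sqrt_2PI_pos. unfold gauss_pdf.
  replace (- s ^ 2 / 2) with (- y ^ 2 / 2 + (y ^ 2 - s ^ 2) / 2) by field.
  rewrite exp_plus. field; lra.
Qed.

Lemma gauss_pdf_le_at_0 t : gauss_pdf t <= gauss_pdf 0.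
Proof.
  rewrite (gauss_pdf_shift t 0). pose proof (gauss_pdf_pos 0).
  rewrite <- (Rmult_1_r (gauss_pdf 0)) at 2. apply Rmult_le_compat_l; [lra|].
  rewrite <- exp_0. apply exp_le_compat. nra.
Qed.

Lemma gauss_pdf_0_sqr : gauss_pdf 0 * gauss_pdf 0 = / (2 * PI).
Proof.
  pose proof sqrt_2PI_pos. pose proof PI_RGT_0.
  unfold gauss_pdf. replace (- 0 ^ 2 / 2) with 0 by field. rewrite exp_0.
  rewrite <- (sqrt_sqrt (2 * PI)) at 3 by lra. field; lra.
Qed.

Lemma is_lim_gauss_pdf_m_infty : is_lim gauss_pdf m_infty 0.
Proof.
  assert (Hexponent : is_lim (fun t => - t ^ 2 / 2) m_infty m_infty).
  { apply (is_lim_le_m_loc (fun t => t)); [|apply is_lim_id].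
    exists (-2); intros t Ht; nra. }
  pose proof sqrt_2PI_pos.
  replace (Finite 0) with (Rbar_mult 0 (/ sqrt (2 * PI))) by (simpl; f_equal; ring).
  apply is_lim_scal_r.
  apply (is_lim_comp exp (fun t => - t ^ 2 / 2) m_infty 0 m_infty).
  - apply is_lim_exp_m.
  - exact Hexponent.
  - exists 0; intros; discriminate.
Qed.

Definition gauss_int (x : R) : R := RInt gauss_pdf 0 x.

Definition gauss_aux (x : R) : R :=
  RInt (fun t => gauss_pdf x * gauss_pdf (x * t) / (1 + t ^ 2)) 0 1.

Lemma is_derive_gauss_int x : is_derive gauss_int x (gauss_pdf x).
Proof.
  apply (is_derive_RInt gauss_pdf gauss_int 0 x); [|apply continuous_gauss_pdf].
  apply filter_forall; intros b.
  apply (RInt_correct (V := R_CompleteNormedModule)), ex_RInt_gauss_pdf.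
Qed.

Lemma is_RInt_scaled_gauss_pdf x :
  is_RInt (fun t => x * gauss_pdf (x * t)) 0 1 (gauss_int x).
Proof.
  apply (is_RInt_ext (fun t => scal x (gauss_pdf (x * t + 0)))).
  { intros t _. rewrite Rplus_0_r. reflexivity. }
  apply (is_RInt_comp_lin gauss_pdf x 0 0 1). rewrite Rmult_0_r, Rmult_1_r, !Rplus_0_r.
  apply (RInt_correct (V := R_CompleteNormedModule)), ex_RInt_gauss_pdf.
Qed.

Lemma gauss_int_nonpos x : x <= 0 -> gauss_int x <= 0.
Proof.
  intros Hx. unfold gauss_int.
  rewrite <- (opp_RInt_swap (V := R_CompleteNormedModule)) by apply ex_RInt_gauss_pdf.
  pose proof (RInt_gauss_pdf_ge_0 x 0 Hx).
  unfold opp; simpl; lra.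
Qed.

Lemma is_derive_gauss_aux_integrand x t :
  is_derive (fun u => gauss_pdf u * gauss_pdf (u * t) / (1 + t ^ 2)) x
    (- x * gauss_pdf x * gauss_pdf (x * t)).
Proof.
  assert (0 < 1 + t ^ 2) by nra. pose proof sqrt_2PI_pos.
  unfold gauss_pdf; auto_derive; [lra|].
  replace (- (x * (x * 1)) * / 2) with (- x ^ 2 / 2) by field.
  replace (- (x * t * (x * t * 1)) * / 2) with (- (x * t) ^ 2 / 2) by field.
  field; lra.
Qed.

Lemma continuity_2d_pt_gauss_aux_integrand_derive x t :
  continuity_2d_pt (fun u v => - u * gauss_pdf u * gauss_pdf (u * v)) x t.
Proof.
  assert (Hpdf : forall y, continuity_pt gauss_pdf y)
    by (intros; apply continuity_pt_filterlim, continuous_gauss_pdf).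
  apply continuity_2d_pt_mult; [apply continuity_2d_pt_mult|].
  - apply continuity_2d_pt_opp, continuity_2d_pt_id1.
  - apply (continuity_1d_2d_pt_comp gauss_pdf (fun u v => u));
      [apply Hpdf | apply continuity_2d_pt_id1].
  - apply (continuity_1d_2d_pt_comp gauss_pdf (fun u v => u * v)); [apply Hpdf|].
    apply continuity_2d_pt_mult; [apply continuity_2d_pt_id1 | apply continuity_2d_pt_id2].
Qed.

Lemma ex_RInt_gauss_aux_integrand x :
  ex_RInt (fun t => gauss_pdf x * gauss_pdf (x * t) / (1 + t ^ 2)) 0 1.
Proof.
  apply (ex_RInt_continuous (V := R_CompleteNormedModule)); intros t _.
  apply (ex_derive_continuous (fun t => gauss_pdf x * gauss_pdf (x * t) / (1 + t ^ 2))).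
  unfold gauss_pdf; auto_derive. pose proof sqrt_2PI_pos; nra.
Qed.

Lemma is_derive_gauss_aux x : is_derive gauss_aux x (- gauss_pdf x * gauss_int x).
Proof.
  set (f := fun u t => gauss_pdf u * gauss_pdf (u * t) / (1 + t ^ 2)).
  assert (Hdf : forall u t, Derive (fun z => f z t) u = - u * gauss_pdf u * gauss_pdf (u * t))
    by (intros; apply is_derive_unique, is_derive_gauss_aux_integrand).
  replace (- gauss_pdf x * gauss_int x) with (RInt (fun t => Derive (fun u => f u t) x) 0 1).
  - apply is_derive_RInt_param.
    + apply filter_forall; intros u t _; eexists; apply is_derive_gauss_aux_integrand.
    + intros t _.
      apply (continuity_2d_pt_ext (fun u v => - u * gauss_pdf u * gauss_pdf (u * v)));
        [intros; symmetry; apply Hdf | apply continuity_2d_pt_gauss_aux_integrand_derive].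
    + apply filter_forall; apply ex_RInt_gauss_aux_integrand.
  - apply is_RInt_unique, (is_RInt_ext (fun t => scal (- gauss_pdf x) (x * gauss_pdf (x * t)))).
    + intros t _. rewrite Hdf. unfold scal; simpl; unfold mult; simpl; ring.
    + change (- gauss_pdf x * gauss_int x) with (scal (- gauss_pdf x) (gauss_int x)).
      apply (is_RInt_scal (V := R_NormedModule)), is_RInt_scaled_gauss_pdf.
Qed.

Lemma gauss_aux_0 : gauss_aux 0 = / 8.
Proof.
  assert (Hatan : is_RInt (fun t => / (1 + t²)) 0 1 (minus (atan 1) (atan 0))).
  { apply (is_RInt_derive (V := R_CompleteNormedModule) atan);
      intros; [apply is_derive_atan|].
    apply (ex_derive_continuous (fun t => / (1 + t²))); auto_derive. unfold Rsqr; nra. }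
  unfold gauss_aux.
  rewrite (RInt_ext _ (fun t => scal (gauss_pdf 0 * gauss_pdf 0) (/ (1 + t²)))).
  2: { intros t _. rewrite Rmult_0_l. unfold scal; simpl; unfold mult, Rsqr; simpl. field. nra. }
  rewrite (RInt_scal (V := R_CompleteNormedModule)) by (eexists; exact Hatan).
  rewrite (is_RInt_unique _ _ _ _ Hatan), gauss_pdf_0_sqr, atan_1, atan_0.
  unfold minus, plus, opp, scal; simpl; unfold mult; simpl. field. apply PI_neq0.
Qed.

Lemma gauss_int_sqr_add_gauss_aux x : gauss_int x ^ 2 + 2 * gauss_aux x = / 4.
Proof.
  assert (Hconst : forall y, is_derive (fun y => gauss_int y ^ 2 + 2 * gauss_aux y) y 0).
  { intros y. auto_derive.
    - repeat split; eexists; [apply is_derive_gauss_int | apply is_derive_gauss_aux].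
    - replace (Derive (fun z => gauss_int z) y) with (gauss_pdf y)
        by (symmetry; apply is_derive_unique, is_derive_gauss_int).
      replace (Derive (fun z => gauss_aux z) y) with (- gauss_pdf y * gauss_int y)
        by (symmetry; apply is_derive_unique, is_derive_gauss_aux).
      ring. }
  rewrite (is_derive_0_eq _ Hconst x 0), gauss_aux_0.
  unfold gauss_int; rewrite RInt_point. unfold zero; simpl. field.
Qed.

Lemma gauss_aux_bounds x : 0 <= gauss_aux x <= gauss_pdf 0 * gauss_pdf x.
Proof.
  pose proof (gauss_pdf_pos x). pose proof (gauss_pdf_pos 0).
  split; unfold gauss_aux.
  - apply RInt_ge_0; [lra | apply ex_RInt_gauss_aux_integrand |]; intros t _.
    pose proof (gauss_pdf_pos (x * t)).
    apply Rlt_le, Rdiv_lt_0_compat; [apply Rmult_lt_0_compat |]; nra.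
  - replace (gauss_pdf 0 * gauss_pdf x) with (RInt (fun _ => gauss_pdf x * gauss_pdf 0) 0 1)
      by (rewrite RInt_const; unfold scal; simpl; unfold mult; simpl; ring).
    apply RInt_le; [lra | apply ex_RInt_gauss_aux_integrand | apply ex_RInt_const |].
    intros t _.
    assert (gauss_pdf x * gauss_pdf (x * t) <= gauss_pdf x * gauss_pdf 0)
      by (apply Rmult_le_compat_l; [lra | apply gauss_pdf_le_at_0]).
    assert (0 <= gauss_pdf x * gauss_pdf 0 * t ^ 2)
      by (apply Rmult_le_pos; [nra | apply pow2_ge_0]).
    pose proof (pow2_ge_0 t). apply Rle_div_l; lra.
Qed.

Lemma gauss_int_le_half x : gauss_int x <= / 2.
Proof. pose proof (gauss_int_sqr_add_gauss_aux x). pose proof (gauss_aux_bounds x). nra. Qed.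

Lemma is_lim_gauss_int_m_infty : is_lim gauss_int m_infty (- / 2).
Proof.
  apply (is_lim_le_le_loc (fun _ => - / 2) (fun x => - / 2 + 4 * gauss_pdf 0 * gauss_pdf x)).
  - exists 0; intros x Hx.
    pose proof (gauss_int_sqr_add_gauss_aux x). pose proof (gauss_aux_bounds x).
    pose proof (gauss_int_nonpos x ltac:(lra)).
    (* (1/2 + gauss_int x) (1/2 - gauss_int x) = 2 gauss_aux x, and 1/2 - gauss_int x >= 1/2 *)
    split; nra.
  - apply is_lim_const.
  - eapply is_lim_plus; [apply is_lim_const | apply is_lim_scal_l, is_lim_gauss_pdf_m_infty |].
    unfold is_Rbar_plus; simpl. do 2 f_equal; ring.
Qed.

Lemma Phi_gauss_int x : Phi x = / 2 + gauss_int x.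
Proof.
  assert (Hderive : forall y, Derive gauss_int y = gauss_pdf y)
    by (intros; apply is_derive_unique, is_derive_gauss_int).
  assert (Hint : is_RInt_gen gauss_pdf (Rbar_locally m_infty) (at_point x)
                   (gauss_int x - - / 2)).
  { apply (is_RInt_gen_ext (Derive gauss_int)); [apply filter_forall; intros; apply Hderive|].
    apply is_RInt_gen_Derive.
    - apply filter_forall; intros; eexists; apply is_derive_gauss_int.
    - apply filter_forall; intros ab y _.
      apply (continuous_ext gauss_pdf);
        [intros; symmetry; apply Hderive | apply continuous_gauss_pdf].
    - apply is_lim_gauss_int_m_infty.
    - intros P HP; apply locally_singleton in HP; exact HP. }
  unfold Phi; rewrite (is_RInt_gen_unique (V := R_CompleteNormedModule) _ _ Hint); ring.
Qed.

Lemma Phi_sub a b : Phi b - Phi a = RInt gauss_pdf a b.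
Proof.
  rewrite !Phi_gauss_int. unfold gauss_int.
  rewrite <- (RInt_Chasles (V := R_CompleteNormedModule) gauss_pdf 0 a b)
    by apply ex_RInt_gauss_pdf.
  unfold plus; simpl; ring.
Qed.

Lemma Phi_le_1 y : Phi y <= 1.
Proof. rewrite Phi_gauss_int; pose proof (gauss_int_le_half y); lra. Qed.

Lemma Phi_le a b : a <= b -> Phi a <= Phi b.
Proof. intros Hab. pose proof (RInt_gauss_pdf_ge_0 a b Hab). pose proof (Phi_sub a b); lra. Qed.

Lemma gauss_pdf_le_RInt t : 0 <= t -> gauss_pdf t <= (t + 1) * RInt gauss_pdf t (t + 2).
Proof.
  intros Ht.
  (* the integrand is the derivative of s |-> - gauss_pdf s * (t + 2 - s) *)
  set (df := fun s => gauss_pdf s * (1 + s * (t + 2 - s))).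
  assert (Hdf : is_RInt df t (t + 2) (2 * gauss_pdf t)).
  { replace (2 * gauss_pdf t) with
      (minus (- gauss_pdf (t + 2) * (t + 2 - (t + 2))) (- gauss_pdf t * (t + 2 - t)))
      by (unfold minus, plus, opp; simpl; ring).
    apply (is_RInt_derive (V := R_CompleteNormedModule) (fun s => - gauss_pdf s * (t + 2 - s)));
      intros s _; unfold df; pose proof sqrt_2PI_pos.
    - unfold gauss_pdf; auto_derive; [lra|].
      replace (- (s * (s * 1)) * / 2) with (- s ^ 2 / 2) by field. field; lra.
    - apply (ex_derive_continuous df). unfold df, gauss_pdf; auto_derive. lra. }
  assert (Hle : RInt df t (t + 2) <= RInt (fun s => scal (2 * (t + 1)) (gauss_pdf s)) t (t + 2)).
  { apply RInt_le; [lra | eexists; exact Hdf | apply (ex_RInt_scal (V := R_NormedModule)), ex_RInt_gauss_pdf |].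
    intros s Hs. unfold df, scal; simpl; unfold mult; simpl.
    pose proof (gauss_pdf_pos s).
    assert (0 <= (s - t - 1) ^ 2) by apply pow2_ge_0.
    assert (0 <= t * (s - t)) by (apply Rmult_le_pos; lra).
    rewrite (Rmult_comm _ (gauss_pdf s)). apply Rmult_le_compat_l; nra. }
  rewrite (is_RInt_unique _ _ _ _ Hdf), (RInt_scal (V := R_CompleteNormedModule)) in Hle
    by apply ex_RInt_gauss_pdf.
  unfold scal in Hle; simpl in Hle; unfold mult in Hle; simpl in Hle. lra.
Qed.

Lemma gauss_pdf_le_Phi_tail t : 0 <= t -> gauss_pdf t <= (t + 1) * (1 - Phi t).
Proof.
  intros Ht.
  pose proof (gauss_pdf_le_RInt t Ht). pose proof (Phi_sub t (t + 2)).
  pose proof (Phi_le_1 (t + 2)).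
  assert (0 <= (t + 1) * (1 - Phi (t + 2))) by (apply Rmult_le_pos; lra).
  nra.
Qed.

Lemma Phi_tail_pos t : 0 <= t -> 0 < 1 - Phi t.
Proof. intros Ht. pose proof (gauss_pdf_le_Phi_tail t Ht). pose proof (gauss_pdf_pos t). nra. Qed.

Lemma Phi_tail_le_exp_mul a b v :
  0 <= b -> a <= b -> (b - a) * (b + 1) <= v ->
  (forall s, a <= s <= b -> b ^ 2 - s ^ 2 <= v) ->
  1 - Phi a <= exp v * (1 - Phi b).
Proof.
  intros Hb Hab Hwidth Hexponent.
  assert (Hv : 0 <= v) by nra.
  assert (Hpdf : forall s, a <= s <= b -> gauss_pdf s <= gauss_pdf b * exp (v / 2)).
  { intros s Hs. rewrite (gauss_pdf_shift s b).
    apply Rmult_le_compat_l; [apply Rlt_le, gauss_pdf_pos|].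
    apply exp_le_compat. specialize (Hexponent s Hs). lra. }
  assert (Hint : RInt gauss_pdf a b <= (b - a) * (gauss_pdf b * exp (v / 2))).
  { eapply Rle_trans; [apply Rle_abs|].
    apply abs_RInt_le_const; [lra | apply ex_RInt_gauss_pdf |]. intros s Hs.
    rewrite Rabs_pos_eq by apply Rlt_le, gauss_pdf_pos. apply Hpdf, Hs. }
  pose proof (gauss_pdf_le_Phi_tail b Hb). pose proof (Phi_tail_pos b Hb).
  pose proof (Phi_sub a b). pose proof (mul_exp_half_le_exp_sub_1 v Hv).
  pose proof (exp_pos (v / 2)).
  assert ((b - a) * gauss_pdf b <= v * (1 - Phi b)) by nra.
  nra.
Qed.

Theorem propositionA2 (x h : R) :
  0 <= x ->
  Rabs h <= 1 / (3 * Rmax x 1) ->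
  exp (- (3 * Rabs h * Rmax x 1)) <= (1 - Phi (x + h)) / (1 - Phi x) /\
  (1 - Phi (x + h)) / (1 - Phi x) <= exp (3 * Rabs h * Rmax x 1).
Proof.
  intros Hx Hh.
  set (M := Rmax x 1) in *.
  assert (HxM : x <= M) by apply Rmax_l.
  assert (H1M : 1 <= M) by apply Rmax_r.
  assert (Hu : Rabs h * M <= 1 / 3).
  { apply Rmult_le_compat_r with (r := M) in Hh; [|lra].
    replace (1 / (3 * M) * M) with (1 / 3) in Hh by (field; lra). exact Hh. }
  replace (3 * Rabs h * M) with (3 * (Rabs h * M)) by ring.
  remember (Rabs h * M) as u eqn:Hu_def.
  destruct (Rle_or_lt 0 h) as [Hh0 | Hh0].
  - rewrite Rabs_pos_eq in Hu_def by exact Hh0.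
    assert (h <= u) by nra. assert (h * x <= u) by nra.
    assert (1 - Phi x <= exp (3 * u) * (1 - Phi (x + h))).
    { apply Phi_tail_le_exp_mul; [lra | lra | nra |]. intros s Hs; nra. }
    pose proof (Phi_le x (x + h) ltac:(lra)).
    apply (ratio_bounds_exp (1 - Phi x) (1 - Phi (x + h))); [apply Phi_tail_pos | split]; lra.
  - rewrite Rabs_left in Hu_def by exact Hh0.
    assert (- h <= u) by nra. assert (- h * x <= u) by nra.
    assert (1 - Phi (x + h) <= exp (3 * u) * (1 - Phi x)).
    { apply Phi_tail_le_exp_mul; [lra | lra | nra |].
      intros s Hs. destruct (Rle_or_lt 0 (x + s)); nra. }
    pose proof (Phi_le (x + h) x ltac:(lra)).
    apply (ratio_bounds_exp (1 - Phi (x + h)) (1 - Phi x)); [apply Phi_tail_pos | split]; lra.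
Qed.
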